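(* Let $(x,q)\in\mathbf J$. Then: (i) for each positive integer $m$ there exists a neighborhood $\mathbf W\subset\mathbb R^2$ of $(x,q)$ such that $a_1(y,r)\ldots a_m(y,r)\ge a_1(x,q)\ldots a_m(x,q)$ (lexicographically) for all $(y,r)\in\mathbf W\cap\mathbf J$; (ii) if $(y_n,r_n)$ is a sequence in $\mathbf J$ converging to $(x,q)$ from below (i.e. $y_n\le x$ and $r_n\le q$ for all $n$), then the sequences $(a_i(y_n,r_n))_{i\ge1}$ converge coordinate-wise to $(a_i(x,q))_{i\ge1}$ as $n\to\infty$.
   Context: For real $q>1$ let $\lceil q\rceil$ be the smallest integer $\ge q$ and $A_q=\{0,\ldots,\lceil q\rceil-1\}$. Let $\mathbf J$ be the set of $(x,q)$ with $q>1$ and $x\in J_q:=[0,(\lceil q\rceil-1)/(q-1)]$ (equivalently, $x=\sum_{i\ge1}c_iq^{-i}$ for some digits $c_i\in A_q$). For $(x,q)\in\mathbf J$, the quasi-greedy expansion $(a_i(x,q))$ is: $0^\infty$ if $x=0$; if $x>0$, recursively $a_n(x,q)$ is the largest element of $A_q$ with $\sum_{i=1}^n a_i(x,q)q^{-i}<x$. Finite words of equal length are compared lexicographically. *)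

From Stdlib Require Import Reals Lra Lia ZArith List.
Open Scope R_scope.

(* ceiling: smallest integer >= q.  up z is the unique integer with z < up z <= z+1,
   so 1 - up(-q) is the least integer >= q. *)
Definition ceilR (q : R) : Z := (1 - up (- q))%Z.

(* largest digit of A_q = {0, ..., ceil q - 1} *)
Definition maxdig (q : R) : nat := Z.to_nat (ceilR q - 1).

Fixpoint best (k : nat) (s x q : R) (n : nat) : nat :=
  match k with
  | O => O
  | S k' => if Rlt_dec (s + INR k / q ^ n) x then k else best k' s x q n
  end.

(* partial sums sum_{i=1}^n a_i(x,q) q^{-i} of the quasi-greedy expansion (x > 0) *)
Fixpoint qg_sum (x q : R) (n : nat) : R :=
  match n with
  | O => 0
  | S n' => let s := qg_sum x q n' in
            s + INR (best (maxdig q) s x q (S n')) / q ^ (S n')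
  end.

(* quasi-greedy digit a_i(x,q), for i >= 1 (index 0 is unused, set to 0) *)
Definition qg (x q : R) (i : nat) : nat :=
  match i with
  | O => O
  | S n' => if Req_EM_T x 0 then O
            else best (maxdig q) (qg_sum x q n') x q (S n')
  end.

Definition inJ (x q : R) : Prop :=
  1 < q /\ 0 <= x /\ x <= (IZR (ceilR q) - 1) / (q - 1).

Definition qg_word (x q : R) (m : nat) : list nat := map (qg x q) (seq 1 m).

Fixpoint lex_le (u v : list nat) : Prop :=
  match u, v with
  | nil, nil => True
  | a :: u', b :: v' => (a < b)%nat \/ (a = b /\ lex_le u' v')
  | _, _ => False
  end.

(* The quasi-greedy digits are chosen maximal, so any admissible word b_1 ... b_m
   whose value sum b_i r^-i stays below x is lexicographically at most the
   quasi-greedy word of (x, r).  For (y, r) <= (x, q) the quasi-greedy word of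
   (y, r) is such a word for (x, q), so the word map is monotone.  For (y, r)
   near (x, q) the word a_1(x,q) ... a_m(x,q) is admissible in base r and, by
   continuity of its value in r and the gap x - sum a_i(x,q) q^-i > 0, its value
   in base r stays below y; hence it is below the word of (y, r).  Squeezing the
   two inequalities gives (ii). *)

From Stdlib Require Import Reals Lra Lia ZArith List.
Open Scope R_scope.

Lemma best_le K s x q n : (best K s x q n <= K)%nat.
Proof. induction K; simpl; [lia|]. destruct Rlt_dec; lia. Qed.

Lemma best_max K d s x q n :
  (d <= K)%nat -> s + INR d / q ^ n < x -> (d <= best K s x q n)%nat.
Proof.
  induction K as [|K IH]; intros Hd Hs; simpl; [lia|].
  destruct Rlt_dec as [_|Hnot]; [lia|].
  destruct (Nat.eq_dec d (S K)) as [->|Hne]; [contradiction|].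
  specialize (IH ltac:(lia) Hs); lia.
Qed.

Lemma best_lt K s x q n : s < x -> s + INR (best K s x q n) / q ^ n < x.
Proof.
  induction K; intros Hs; simpl.
  - unfold Rdiv; rewrite Rmult_0_l; lra.
  - destruct Rlt_dec; auto.
Qed.

Lemma qg_sum_lt x q n : 0 < x -> qg_sum x q n < x.
Proof. intros Hx; induction n; simpl; [lra|]. apply best_lt; auto. Qed.

Lemma qg_le_maxdig x q i : (qg x q i <= maxdig q)%nat.
Proof. destruct i; simpl; [lia|]. destruct Req_EM_T; [lia|]. apply best_le. Qed.

Lemma qg_S x q n :
  x <> 0 -> qg x q (S n) = best (maxdig q) (qg_sum x q n) x q (S n).
Proof. intros Hx; simpl; destruct Req_EM_T; [contradiction|reflexivity]. Qed.

Lemma qg_word_zero q m : qg_word 0 q m = repeat 0%nat m.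
Proof.
  unfold qg_word; generalize 1%nat as k.
  induction m as [|m IH]; intros k; simpl; [reflexivity|].
  rewrite IH; destruct k; simpl; [reflexivity|].
  destruct Req_EM_T; [reflexivity|contradiction].
Qed.

Lemma length_qg_word x q m : length (qg_word x q m) = m.
Proof. unfold qg_word; rewrite length_map, length_seq; reflexivity. Qed.

Lemma nth_qg_word x q i :
  (1 <= i)%nat -> nth (pred i) (qg_word x q i) 0%nat = qg x q i.
Proof.
  intros Hi; unfold qg_word.
  rewrite nth_indep with (d' := qg x q 0) by (rewrite length_map, length_seq; lia).
  rewrite map_nth, seq_nth by lia; f_equal; lia.
Qed.

Lemma le_ceilR r : r <= IZR (ceilR r).
Proof. unfold ceilR; rewrite minus_IZR; destruct (archimed (- r)); lra. Qed.

Lemma ceilR_sub1_lt r : IZR (ceilR r) - 1 < r.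
Proof. unfold ceilR; rewrite minus_IZR; destruct (archimed (- r)); lra. Qed.

Lemma maxdig_le q r : IZR (ceilR q) - 1 < r -> (maxdig q <= maxdig r)%nat.
Proof.
  intros Hr; unfold maxdig; pose proof (le_ceilR r).
  destruct (Z_le_gt_dec (ceilR q) (ceilR r)) as [Hle|Hgt]; [lia|].
  assert (IZR (ceilR r) <= IZR (ceilR q - 1)) by (apply IZR_le; lia).
  rewrite minus_IZR in *; lra.
Qed.

Lemma maxdig_monotone q r : q <= r -> (maxdig q <= maxdig r)%nat.
Proof. intros Hqr; apply maxdig_le; pose proof (ceilR_sub1_lt q); lra. Qed.

Lemma lex_le_repeat0 m v : length v = m -> lex_le (repeat 0%nat m) v.
Proof.
  intros <-; induction v as [|b v IH]; simpl; [exact I|].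
  destruct b; [right; split; auto|left; lia].
Qed.

Lemma lex_le_antisym u v :
  length u = length v -> lex_le u v -> lex_le v u -> u = v.
Proof.
  revert v; induction u as [|a u IH]; intros [|b v]; simpl; try tauto; try discriminate.
  intros Hlen [Hab|[Hab Huv]] [Hba|[Hba Hvu]]; try lia.
  subst; f_equal; apply IH; auto.
Qed.

Fixpoint word_value (q : R) (k : nat) (b : list nat) : R :=
  match b with
  | nil => 0
  | d :: b' => INR d / q ^ S k + word_value q (S k) b'
  end.

Lemma word_value_nonneg q k b : 0 < q -> 0 <= word_value q k b.
Proof.
  intros Hq; revert k; induction b as [|d b IH]; intros k; cbn [word_value]; [lra|].
  specialize (IH (S k)).
  assert (0 <= INR d / q ^ S k).
  { unfold Rdiv; apply Rmult_le_pos; [apply pos_INR|].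
    left; apply Rinv_0_lt_compat, pow_lt, Hq. }
  lra.
Qed.

Lemma word_value_antimonotone q r k b :
  0 < r -> r <= q -> word_value q k b <= word_value r k b.
Proof.
  intros Hr Hrq; revert k; induction b as [|d b IH]; intros k; cbn [word_value]; [lra|].
  specialize (IH (S k)).
  assert (INR d / q ^ S k <= INR d / r ^ S k).
  { unfold Rdiv; apply Rmult_le_compat_l; [apply pos_INR|].
    apply Rinv_le_contravar; [apply pow_lt; auto|apply pow_incr; lra]. }
  lra.
Qed.

Lemma word_value_continuous b k q :
  0 < q -> continuity_pt (fun r => word_value r k b) q.
Proof.
  intros Hq; revert k; induction b as [|d b IH]; intros k; simpl.
  - apply continuity_pt_const; intros ? ?; reflexivity.
  - apply (continuity_pt_plus (fun r => INR d / (r * r ^ k)) (fun r => word_value r (S k) b));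
      [|apply IH].
    apply (continuity_pt_div (fun _ => INR d) (fun r => r ^ S k)).
    + apply continuity_pt_const; intros ? ?; reflexivity.
    + apply derivable_continuous_pt, derivable_pt_pow.
    + apply pow_nonzero; lra.
Qed.

Lemma word_value_upper_near b k q e :
  0 < q -> 0 < e ->
  exists alpha, 0 < alpha /\
    forall r, Rabs (r - q) < alpha -> word_value r k b < word_value q k b + e.
Proof.
  intros Hq He.
  destruct (word_value_continuous b k q Hq e He) as [alpha [Halpha Hcont]].
  exists alpha; split; [exact Halpha|]; intros r Hr.
  destruct (Req_EM_T r q) as [->|Hne]; [lra|].
  assert (Hdist : Rabs (word_value r k b - word_value q k b) < e).
  { apply (Hcont r); split; [split; [exact I|auto]|exact Hr]. }
  apply Rabs_def2 in Hdist; lra.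
Qed.

Lemma qg_sum_add x q k m :
  x <> 0 ->
  qg_sum x q k + word_value q k (map (qg x q) (seq (S k) m)) = qg_sum x q (k + m).
Proof.
  intros Hx; revert k; induction m as [|m IH]; intros k.
  - rewrite Nat.add_0_r; simpl; lra.
  - rewrite <- Nat.add_succ_comm, <- IH; cbn [seq map word_value qg_sum].
    rewrite qg_S by exact Hx; lra.
Qed.

Lemma word_value_qg_word x q m :
  x <> 0 -> word_value q 0 (qg_word x q m) = qg_sum x q m.
Proof.
  intros Hx; pose proof (qg_sum_add x q 0 m Hx) as Hadd.
  cbn [qg_sum Nat.add] in Hadd; unfold qg_word; lra.
Qed.

Lemma lex_le_qg_tail x q b k :
  0 < q -> x <> 0 -> (forall d, In d b -> (d <= maxdig q)%nat) ->
  qg_sum x q k + word_value q k b < x ->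
  lex_le b (map (qg x q) (seq (S k) (length b))).
Proof.
  intros Hq Hx; revert k; induction b as [|d b IH]; intros k Hdig Hval; [exact I|].
  cbn [length seq map lex_le word_value] in *; rewrite qg_S by exact Hx.
  pose proof (word_value_nonneg q (S k) b Hq).
  assert (Hd : (d <= best (maxdig q) (qg_sum x q k) x q (S k))%nat).
  { apply best_max; [apply Hdig; left; reflexivity|lra]. }
  destruct (Nat.eq_dec d (best (maxdig q) (qg_sum x q k) x q (S k))) as [E|]; [|left; lia].
  right; split; [exact E|].
  apply IH; [intros; apply Hdig; right; assumption|].
  cbn [qg_sum]; rewrite <- E; lra.
Qed.

Lemma lex_le_qg_word x q b :
  0 < q -> x <> 0 -> (forall d, In d b -> (d <= maxdig q)%nat) ->
  word_value q 0 b < x -> lex_le b (qg_word x q (length b)).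
Proof.
  intros Hq Hx Hdig Hval.
  apply (lex_le_qg_tail x q b 0); auto; simpl; lra.
Qed.

Lemma qg_word_digits_le x q r m :
  (maxdig q <= maxdig r)%nat -> forall d, In d (qg_word x q m) -> (d <= maxdig r)%nat.
Proof.
  intros Hqr d Hd; unfold qg_word in Hd; apply in_map_iff in Hd.
  destruct Hd as [i [<- _]]; eapply Nat.le_trans; [apply qg_le_maxdig|exact Hqr].
Qed.

Lemma qg_word_monotone y r x q m :
  0 <= y -> y <= x -> 1 < r -> r <= q ->
  lex_le (qg_word y r m) (qg_word x q m).
Proof.
  intros Hy0 Hyx Hr Hrq.
  destruct (Req_EM_T y 0) as [->|Hy].
  { rewrite qg_word_zero; apply lex_le_repeat0, length_qg_word. }
  rewrite <- (length_qg_word y r m) at 2.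
  apply lex_le_qg_word; [lra|lra|apply qg_word_digits_le, maxdig_monotone; exact Hrq|].
  pose proof (word_value_antimonotone q r 0 (qg_word y r m) ltac:(lra) Hrq).
  rewrite word_value_qg_word in * by exact Hy.
  pose proof (qg_sum_lt y r m ltac:(lra)); lra.
Qed.

Lemma qg_word_locally_lex_ge x q m :
  inJ x q ->
  exists eps : R, 0 < eps /\
    forall y r : R, Rabs (y - x) < eps -> Rabs (r - q) < eps -> inJ y r ->
      lex_le (qg_word x q m) (qg_word y r m).
Proof.
  intros [Hq [Hx0 _]].
  destruct (Req_EM_T x 0) as [->|Hx].
  { exists 1; split; [lra|]; intros y r _ _ _.
    rewrite qg_word_zero; apply lex_le_repeat0, length_qg_word. }
  pose proof (word_value_qg_word x q m Hx) as Hw.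
  pose proof (qg_sum_lt x q m ltac:(lra)) as Hsum.
  set (gap := (x - qg_sum x q m) / 2).
  set (delta := q - (IZR (ceilR q) - 1)).
  assert (Hdelta : 0 < delta) by (unfold delta; pose proof (ceilR_sub1_lt q); lra).
  destruct (word_value_upper_near (qg_word x q m) 0 q gap ltac:(lra) ltac:(unfold gap; lra))
    as [alpha [Halpha Hnear]].
  exists (Rmin alpha (Rmin gap delta)).
  split; [repeat apply Rmin_pos; unfold gap in *; lra|].
  intros y r Hyx Hrq [Hr [Hy0 _]].
  pose proof (Rmin_l alpha (Rmin gap delta)); pose proof (Rmin_r alpha (Rmin gap delta)).
  pose proof (Rmin_l gap delta); pose proof (Rmin_r gap delta).
  assert (Hval : word_value r 0 (qg_word x q m) < y).
  { pose proof (Hnear r ltac:(lra)); apply Rabs_def2 in Hyx; unfold gap in *; lra. }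
  pose proof (word_value_nonneg r 0 (qg_word x q m) ltac:(lra)).
  rewrite <- (length_qg_word x q m) at 2.
  apply lex_le_qg_word; [lra|intros ->; lra| |exact Hval].
  apply qg_word_digits_le, maxdig_le; apply Rabs_def2 in Hrq; unfold delta in *; lra.
Qed.

Theorem lemma2p3 (x q : R) (HJ : inJ x q) :
  (forall m : nat, (1 <= m)%nat ->
     exists eps : R, 0 < eps /\
       forall y r : R, Rabs (y - x) < eps -> Rabs (r - q) < eps -> inJ y r ->
         lex_le (qg_word x q m) (qg_word y r m))
  /\
  (forall (ys rs : nat -> R),
     (forall n, inJ (ys n) (rs n)) ->
     (forall n, ys n <= x /\ rs n <= q) ->
     Un_cv ys x -> Un_cv rs q ->
     forall i : nat, (1 <= i)%nat ->
       exists N : nat, forall n : nat, (N <= n)%nat -> qg (ys n) (rs n) i = qg x q i).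
Proof.
  split; [intros m _; apply qg_word_locally_lex_ge, HJ|].
  intros ys rs HJn Hbelow Hys Hrs i Hi.
  destruct (qg_word_locally_lex_ge x q i HJ) as [eps [Heps Hnear]].
  destruct (Hys eps Heps) as [N1 HN1]; destruct (Hrs eps Heps) as [N2 HN2].
  exists (Nat.max N1 N2); intros n Hn.
  specialize (HN1 n ltac:(lia)); specialize (HN2 n ltac:(lia)); unfold R_dist in *.
  destruct (HJn n) as [Hrn [Hyn _]]; destruct (Hbelow n) as [Hyx Hrq].
  assert (Hword : qg_word (ys n) (rs n) i = qg_word x q i).
  { apply lex_le_antisym.
    - rewrite !length_qg_word; reflexivity.
    - apply qg_word_monotone; assumption.
    - apply Hnear; auto. }
  rewrite <- (nth_qg_word _ _ _ Hi), Hword, nth_qg_word by exact Hi; reflexivity.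
Qed.
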